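(* Let $p\in\mathbb{C}\setminus\{0\}$. The assignment $$\Delta(H)=H\otimes\mathbb{I}+\mathbb{I}\otimes H,\quad \Delta(E)=E\otimes\mathbb{I}+\mathbb{I}\otimes E,\quad \Delta(F)=p\,F\otimes\mathbb{I}+(1-p)\,\mathbb{I}\otimes F$$ extends to an algebra homomorphism from the oscillator algebra $osc$ to $osc\otimes osc$. Moreover, for all $\lambda_1,\lambda_2\in\mathbb{C}$ and all integers $0\le k\le N$, the vectors $w_{k,N}=\sum_{n=0}^N K_n(k,N)\,|\lambda_1,n\rangle\otimes|\lambda_2,N-n\rangle$ in $V_{\lambda_1}\otimes V_{\lambda_2}$ satisfy $\Delta(H)w_{k,N}=(\lambda_1+\lambda_2+2N)w_{k,N}$, $\Delta(E)w_{k,N}=w_{k,N+1}$ and $\Delta(F)w_{k,N}=-(N-k)\,w_{k,N-1}$ (with $w_{k,k-1}=0$); i.e. the $K_n(k,N)$ are the Clebsch–Gordan coefficients for this coproduct.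
   Context: The oscillator algebra $osc$ is generated by $H,E,F$ with relations $[H,E]=2E$, $[H,F]=-2F$, $[E,F]=1$. For $\lambda\in\mathbb{C}$, $V_\lambda$ is the $osc$-module with basis $\{|\lambda,n\rangle: n\ge 0\}$ and action $H|\lambda,n\rangle=(\lambda+2n)|\lambda,n\rangle$, $E|\lambda,n\rangle=|\lambda,n+1\rangle$, $F|\lambda,n\rangle=-n|\lambda,n-1\rangle$. The functions $K_n(k,N)$ (proportional to Krawtchouk polynomials) are $$K_n(k,N)=\binom{N}{n}\,{}_2F_1\!\left(\begin{matrix}-n,\ -k\\ -N\end{matrix}\;\Big|\;p^{-1}\right)=\binom{N}{n}\sum_{j=0}^{\min(n,k)}\frac{(-n)_j(-k)_j}{j!\,(-N)_j}p^{-j},$$ with $(a)_j=a(a+1)\cdots(a+j-1)$. *)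

From HB Require Import structures.
From mathcomp Require Import all_boot all_order all_algebra.
Set Implicit Arguments. Unset Strict Implicit. Unset Printing Implicit Defensive.
Import Order.TTheory GRing.Theory Num.Theory.
Local Open Scope ring_scope.

(* (h, e, f) in an algebra B satisfies the defining relations of osc:
   [h,e] = 2e, [h,f] = -2f, [e,f] = 1.  By the universal property of the
   algebra presented by generators H,E,F and these relations, an assignment
   H |-> h, E |-> e, F |-> f extends to an algebra homomorphism osc -> B
   iff osc_rel h e f holds. *)
Definition osc_rel (R : comNzRingType) (B : algType R) (h e f : B) : Prop :=
  [/\ h * e - e * h = e *+ 2,
      h * f - f * h = - (f *+ 2) &
      e * f - f * e = 1].

(* Two triples whose elements pairwise commute (the images of X (x) 1 and
   1 (x) Y in osc (x) osc). *)
Definition commuting_triples (R : comNzRingType) (B : algType R)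
  (h1 e1 f1 h2 e2 f2 : B) : Prop :=
  forall x y, x \in [:: h1; e1; f1] -> y \in [:: h2; e2; f2] -> x * y = y * x.

(* A vector of V_lambda is given by its coefficients c : nat -> C on the basis
   |lambda,n>; a vector of V_l1 (x) V_l2 by its coefficients c m n on the
   basis |l1,m> (x) |l2,n>. *)
Section Modules.
Variable C : numClosedFieldType.

(* Action on V_lambda, written on coefficient sequences:
   H|n> = (lambda+2n)|n>, E|n> = |n+1>, F|n> = -n|n-1>. *)
Definition actH (lam : C) (c : nat -> C) : nat -> C :=
  fun n => (lam + 2 * n%:R) * c n.
Definition actE (c : nat -> C) : nat -> C :=
  fun n => if n is n'.+1 then c n' else 0.
Definition actF (c : nat -> C) : nat -> C :=
  fun n => - (n.+1)%:R * c n.+1.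

(* X (x) 1 and 1 (x) X acting on V_l1 (x) V_l2. *)
Definition on1 (op : (nat -> C) -> nat -> C) (c : nat -> nat -> C) :
  nat -> nat -> C := fun m n => op (fun m' => c m' n) m.
Definition on2 (op : (nat -> C) -> nat -> C) (c : nat -> nat -> C) :
  nat -> nat -> C := fun m n => op (c m) n.

Definition DeltaH (l1 l2 : C) (c : nat -> nat -> C) : nat -> nat -> C :=
  fun m n => on1 (actH l1) c m n + on2 (actH l2) c m n.
Definition DeltaE (c : nat -> nat -> C) : nat -> nat -> C :=
  fun m n => on1 actE c m n + on2 actE c m n.
Definition DeltaF (p : C) (c : nat -> nat -> C) : nat -> nat -> C :=
  fun m n => p * on1 actF c m n + (1 - p) * on2 actF c m n.

Definition poch (a : C) (j : nat) : C := \prod_(i < j) (a + i%:R).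

(* K_n(k,N) = binom(N,n) 2F1(-n,-k;-N; 1/p) *)
Definition Kraw (p : C) (n k N : nat) : C :=
  'C(N, n)%:R *
  \sum_(j < (minn n k).+1)
     (poch (- n%:R) j * poch (- k%:R) j / (j`!%:R * poch (- N%:R) j))
       * p^-1 ^+ j.

Definition wvec (p : C) (k N : nat) : nat -> nat -> C :=
  fun m n => if m + n == N then Kraw p m k N else 0.

End Modules.

From HB Require Import structures.
From mathcomp Require Import all_boot all_order all_algebra ring zify.
Import Order.TTheory GRing.Theory Num.Theory.
Local Open Scope ring_scope.

(* The coproduct respects the relations because the commutator is bilinear, the
   cross commutators vanish and the coefficients p and 1 - p of Delta(F) add up
   to 1.  For the Clebsch-Gordan property, (-a)_j = (-1)^j a^_j and
   C(m+n,m) m^_j = (m+n)^_j C(m+n-j,n) turn K_m(k,m+n) into the binomial sum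
   sum_j C(k,j) (-1/p)^j C(m+n-j,n).  On this form Delta(E) is Pascal's rule in
   the last binomial, and Delta(F) is a telescoping sum over j whose
   consecutive terms cancel because p (-1/p) = -1. *)

Section Bracket.
Variables (R : comNzRingType) (B : algType R).

Definition lie (x y : B) : B := x * y - y * x.

Lemma lieDl x y z : lie (x + y) z = lie x z + lie y z.
Proof. by rewrite /lie mulrDl mulrDr opprD addrACA. Qed.

Lemma lieDr x y z : lie x (y + z) = lie x y + lie x z.
Proof. by rewrite /lie mulrDl mulrDr opprD addrACA. Qed.

Lemma lieZr a x y : lie x (a *: y) = a *: lie x y.
Proof. by rewrite /lie -scalerAr -scalerAl scalerBr. Qed.

Lemma lie_comm x y : GRing.comm x y -> lie x y = 0 /\ lie y x = 0.
Proof. by rewrite /lie => ->; rewrite !subrr. Qed.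

Lemma osc_rel_coproduct (a b : R) (h1 e1 f1 h2 e2 f2 : B) : a + b = 1 ->
  osc_rel h1 e1 f1 -> osc_rel h2 e2 f2 -> commuting_triples h1 e1 f1 h2 e2 f2 ->
  osc_rel (h1 + h2) (e1 + e2) (a *: f1 + b *: f2).
Proof.
rewrite /osc_rel -!/(lie _ _) => ab1 [he1 hf1 ef1] [he2 hf2 ef2] com.
have cross x y : x \in [:: h1; e1; f1] -> y \in [:: h2; e2; f2] ->
    lie x y = 0 /\ lie y x = 0.
  by move=> x1 y2; apply/lie_comm/com.
have [he12 hf12 ef12] : [/\ lie h1 e2 = 0, lie h1 f2 = 0 & lie e1 f2 = 0].
  by split; apply: (cross _ _ _ _).1; rewrite !inE eqxx ?orbT.
have [eh21 fh21 fe21] : [/\ lie h2 e1 = 0, lie h2 f1 = 0 & lie e2 f1 = 0].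
  by split; apply: (cross _ _ _ _).2; rewrite !inE eqxx ?orbT.
split; rewrite !(lieDl, lieDr, lieZr).
- by rewrite he1 he2 he12 eh21 addr0 add0r mulrnDl.
- by rewrite hf1 hf2 hf12 fh21 !scaler0 addr0 add0r mulrnDl !scalerMnr !scalerN opprD.
- by rewrite ef1 ef2 ef12 fe21 !scaler0 addr0 add0r -scalerDl ab1 scale1r.
Qed.
End Bracket.

Lemma mul_bin_ffact m n j : ('C(m + n, m) * m ^_ j = (m + n) ^_ j * 'C(m + n - j, n))%N.
Proof.
elim: j => [|j IH]; first by rewrite !ffactn0 muln1 mul1n subn0 -bin_sub ?leq_addr // addKn.
rewrite !ffactnSr mulnA IH -!mulnA; congr (_ * _)%N.
by rewrite subnS mul_bin_down subnAC addnK mulnC.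
Qed.

Section KrawBin.
Variables (F : fieldType) (p : F).

Definition kraw_term (k m n j : nat) : F :=
  'C(k, j)%:R * (- p^-1) ^+ j * 'C(m + n - j, n)%:R.

Definition kraw_bin (k m n : nat) : F := \sum_(j < k.+1) kraw_term k m n j.

Lemma kraw_bin_0l k n : (k <= n)%N -> kraw_bin k 0 n = 1.
Proof.
move=> le_kn; rewrite /kraw_bin big_ord_recl big1 => [|j _].
  by rewrite /kraw_term subn0 bin0 binn mulr1 mul1r addr0.
by rewrite /kraw_term lift0 add0n (@bin_small (n - _)) ?mulr0 //; have := ltn_ord j; lia.
Qed.

Lemma kraw_bin_0r k m : kraw_bin k m 0 = (1 - p^-1) ^+ k.
Proof.
rewrite addrC exprD1n; apply: eq_bigr => j _.
by rewrite /kraw_term bin0 mulr1 mulr_natl.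
Qed.

Lemma kraw_binS k m n : (k <= (m + n).+1)%N ->
  kraw_bin k m.+1 n.+1 = kraw_bin k m n.+1 + kraw_bin k m.+1 n.
Proof.
move=> le_k_mn; rewrite /kraw_bin -big_split; apply: eq_bigr => j _ /=.
have le_jk : (j <= k)%N by rewrite -ltnS.
rewrite /kraw_term -mulrDr -natrD.
have -> : (m.+1 + n.+1 - j = (m + n.+1 - j).+1)%N by lia.
by rewrite binS addSn -addnS.
Qed.

Hypothesis p_neq0 : p != 0.

Lemma kraw_term_lowering k m n j : (j <= k <= (m + n).+1)%N ->
  p * m.+1%:R * kraw_term k m.+1 n j + (1 - p) * n.+1%:R * kraw_term k m n.+1 j
    - ((m + n).+1 - k)%:R * kraw_term k m n j
  = p * j%:R * kraw_term k m.+1 n j - p * j.+1%:R * kraw_term k m.+1 n j.+1.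
Proof.
case/andP=> le_jk le_k_mn; rewrite /kraw_term exprS natrB //.
set r := ((m + n).+1 - j)%N.
have -> : (m + n.+1 - j = r)%N by rewrite /r; lia.
have -> : (m + n - j = r.-1)%N by rewrite /r; lia.
have -> : (m.+1 + n - j.+1 = r.-1)%N by rewrite /r; lia.
have r_def : r%:R = (m + n).+1%:R - j%:R :> F by rewrite natrB ?(leq_trans le_jk).
have bin_m : m.+1%:R * 'C(r, n)%:R = r%:R * 'C(r.-1, n)%:R + j%:R * 'C(r, n)%:R :> F.
  rewrite -!natrM -natrD; congr _%:R.
  have [le_nr|lt_rn] := leqP n r; last by rewrite !bin_small ?muln0 //; lia.
  by rewrite mul_bin_down -mulnDl /r; congr (_ * _)%N; lia.
have bin_n : n.+1%:R * 'C(r, n.+1)%:R = r%:R * 'C(r.-1, n)%:R :> F.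
  by rewrite -!natrM mul_bin_diag.
have bin_k : j.+1%:R * 'C(k, j.+1)%:R = (k%:R - j%:R) * 'C(k, j)%:R :> F.
  by rewrite -natrB // -!natrM mul_bin_left.
have pq : p * - p^-1 = -1 by rewrite mulrN mulfV.
(* [ring:] uses the equations as rewrite rules, which needs monomial left-hand sides. *)
move: (- p^-1) (r%:R : F) (m.+1%:R : F) (n.+1%:R : F) (j.+1%:R : F)
  pq r_def bin_m bin_n bin_k => q R a b c pq r_def bin_m bin_n bin_k.
ring: pq r_def bin_m bin_n bin_k.
Qed.

Lemma kraw_bin_lowering k m n : (k <= (m + n).+1)%N ->
  p * m.+1%:R * kraw_bin k m.+1 n + (1 - p) * n.+1%:R * kraw_bin k m n.+1
  = ((m + n).+1 - k)%:R * kraw_bin k m n.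
Proof.
move=> le_k_mn; apply/eqP; rewrite -subr_eq0; apply/eqP.
rewrite /kraw_bin !mulr_sumr -big_split -sumrB /=.
pose g i := p * i%:R * kraw_term k m.+1 n i.
transitivity (\sum_(i < k.+1) (g i - g i.+1)).
  by apply: eq_bigr => i _; rewrite kraw_term_lowering // le_k_mn -ltnS andbT.
rewrite -(big_mkord xpredT (fun i => g i - g i.+1)).
rewrite (telescope_sumr_eq (fun i => - g i) _ (leq0n _)) => [|i _]; last first.
  by rewrite opprK addrC.
by rewrite /g /kraw_term (@bin_small k) // !(mulr0, mul0r) oppr0 subrr.
Qed.

End KrawBin.

Arguments kraw_term {F}.
Arguments kraw_bin {F}.

Section Krawtchouk.
Variable C : numClosedFieldType.
Implicit Types (p : C) (k m n N : nat).

Lemma poch_oppn (a j : nat) : poch (- a%:R : C) j = (-1) ^+ j * (a ^_ j)%:R.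
Proof.
elim: j => [|j IH]; first by rewrite /poch big_ord0 expr0 ffactn0 mulr1.
rewrite /poch big_ord_recr /= -/(poch _ j) IH ffactnSr exprS.
have [le_ja|lt_aj] := leqP j a; last by rewrite ffact_small // !mulr0 mul0r.
by rewrite natrM natrB //; ring.
Qed.

Definition kraw_hyper_term p k m n j : C :=
  'C(m + n, m)%:R * (poch (- m%:R) j * poch (- k%:R) j
                      / (j`!%:R * poch (- (m + n)%:R) j) * p^-1 ^+ j).

Lemma kraw_hyper_termE p k m n j : (j <= m + n)%N ->
  kraw_hyper_term p k m n j = kraw_term p k m n j.
Proof.
move=> le_j_mn; rewrite /kraw_hyper_term /kraw_term !poch_oppn -(bin_ffact k j) natrM.
have swap : 'C(m + n, m)%:R * (m ^_ j)%:R = ((m + n) ^_ j)%:R * 'C(m + n - j, n)%:R :> C.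
  by rewrite -!natrM mul_bin_ffact.
have fact_neq0 : (j`!%:R : C) != 0 by rewrite pnatr_eq0 -lt0n fact_gt0.
have ffact_neq0 : (((m + n) ^_ j)%:R : C) != 0 by rewrite pnatr_eq0 -lt0n ffact_gt0.
have sign_neq0 : ((-1) ^+ j : C) != 0 by rewrite expf_neq0 // oppr_eq0 oner_eq0.
rewrite -[- p^-1]mulN1r exprMn.
field: swap.
by rewrite fact_neq0 ffact_neq0 sign_neq0.
Qed.

Lemma KrawE p k m n : (k <= m + n)%N -> Kraw p m k (m + n) = kraw_bin p k m n.
Proof.
move=> le_k_mn; rewrite /Kraw mulr_sumr.
rewrite (big_ord_widen k.+1 (kraw_hyper_term p k m n)) ?ltnS ?geq_minr //.
rewrite big_mkcond; apply: eq_bigr => j _ /=.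
have le_jk : (j <= k)%N by rewrite -ltnS.
case: ifPn => [_|not_le_j_min]; first by rewrite kraw_hyper_termE // (leq_trans le_jk).
by rewrite /kraw_term (@bin_small (m + n - j)) ?mulr0 //; lia.
Qed.

Lemma wvec_kraw_bin p k N m n : (k <= N)%N ->
  wvec p k N m n = if (m + n == N)%N then kraw_bin p k m n else 0.
Proof. by move=> le_kN; rewrite /wvec; case: eqP => // eN; subst N; apply: KrawE. Qed.

Lemma DeltaH_wvec l1 l2 p k N m n :
  DeltaH l1 l2 (wvec p k N) m n = (l1 + l2 + 2 * N%:R) * wvec p k N m n.
Proof.
rewrite /DeltaH /on1 /on2 /actH /wvec.
by case: eqP => [<-|_]; rewrite ?mulr0 ?addr0 // natrD; ring.
Qed.

Lemma DeltaE_wvec p k N m n : (k <= N)%N ->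
  DeltaE (wvec p k N) m n = wvec p k N.+1 m n.
Proof.
move=> le_kN; rewrite /DeltaE /on1 /on2 /actE.
case: m n => [|m] [|n] /=; rewrite !wvec_kraw_bin ?(leqW le_kN) //.
- by rewrite addr0.
- rewrite add0r !add0n eqSS; case: eqP => // eN; subst N.
  by rewrite !kraw_bin_0l ?(leqW le_kN).
- by rewrite addr0 !addn0 eqSS; case: eqP => // _; rewrite !kraw_bin_0r.
- by rewrite !addSn !addnS !eqSS; case: eqP => [eN|_]; rewrite ?addr0 // kraw_binS ?eN.
Qed.

Lemma DeltaF_wvec p k N m n : p != 0 -> (k <= N)%N ->
  DeltaF p (wvec p k N) m n
  = - (N - k)%:R * (if (k < N)%N then wvec p k N.-1 m n else 0).
Proof.
move=> p_neq0 le_kN.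
rewrite /DeltaF /on1 /on2 /actF !(wvec_kraw_bin p _ _ _ _ le_kN) addSn addnS.
have [eN|neN] := eqVneq (m + n)%N.+1 N; last first.
  rewrite !mulr0 addr0; case: ltnP => [lt_kN|_]; last by rewrite mulr0.
  rewrite wvec_kraw_bin; last by lia.
  have/negbTE -> : (m + n != N.-1)%N by apply/eqP; lia.
  by rewrite mulr0.
subst N.
transitivity
  (- (p * m.+1%:R * kraw_bin p k m.+1 n + (1 - p) * n.+1%:R * kraw_bin p k m n.+1)).
  by ring.
rewrite kraw_bin_lowering //; case: ltnP => [lt_k_mn|le_mn_k].
  by rewrite (wvec_kraw_bin p k (m + n) m n lt_k_mn) eqxx mulNr.
have -> : ((m + n).+1 - k = 0)%N by apply/eqP; rewrite subn_eq0.
by rewrite mul0r oppr0 mulr0.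
Qed.

End Krawtchouk.

Theorem mainTheorem2 (C : numClosedFieldType) (p : C) (hp : p != 0) :
  (* Delta extends to an algebra homomorphism osc -> osc (x) osc: the images
     satisfy the osc relations in any algebra containing two commuting copies
     of osc (in particular in osc (x) osc). *)
  (forall (B : algType C) (h1 e1 f1 h2 e2 f2 : B),
      osc_rel h1 e1 f1 -> osc_rel h2 e2 f2 ->
      commuting_triples h1 e1 f1 h2 e2 f2 ->
      osc_rel (h1 + h2) (e1 + e2) (p *: f1 + (1 - p) *: f2))
  /\
  (* Clebsch-Gordan property of the Krawtchouk functions. *)
  (forall (l1 l2 : C) (k N : nat), (k <= N)%N ->
     (forall m n, DeltaH l1 l2 (wvec p k N) m n
                  = (l1 + l2 + 2 * N%:R) * wvec p k N m n)
     /\ (forall m n, DeltaE (wvec p k N) m n = wvec p k N.+1 m n)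
     /\ (forall m n, DeltaF p (wvec p k N) m n
                  = - (N - k)%:R * (if (k < N)%N then wvec p k N.-1 m n else 0))).
Proof.
split=> [B h1 e1 f1 h2 e2 f2|l1 l2 k N le_kN].
  exact/osc_rel_coproduct/subrKC.
split; [|split] => m n.
- exact: DeltaH_wvec.
- exact: DeltaE_wvec.
- exact: DeltaF_wvec.
Qed.
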